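(* For all $m,t\in\mathbb{N}$ with $m\geq 3$ and all integers $r$ with $2\leq r\leq \frac{m}{2+\sqrt{2}}$, \[ R_t(r,m)\leq \left(1-\frac{1}{2^t}\right)2^m-\frac{\sqrt{2^t-1}}{2^t}\left(1+\sqrt{2}\right)^{r-1}2^{\frac{m-1}{2}}+\frac{\sqrt{2^t-1}}{2^{t}\sqrt[4]{2} }\,r\binom{m}{r}. \]
   Context: For a $t\times n$ matrix $\mathbf{v}$ over $\mathbb{F}_2$ with rows $\overline{v}_1,\dots,\overline{v}_t$, $\mathrm{wt}^{(t)}(\mathbf{v})=\left|\bigcup_{i} \mathrm{supp}(\overline{v}_i)\right|$ and $d^{(t)}(\mathbf{u},\mathbf{v})=\mathrm{wt}^{(t)}(\mathbf{u}-\mathbf{v})$. For a linear code $C\subseteq\mathbb{F}_2^n$, $C^t$ is the set of $t\times n$ matrices all of whose rows lie in $C$, and $R_t(C)$ is the smallest integer $\rho$ such that for every $\mathbf{v}\in\mathbb{F}_2^{t\times n}$ some $\mathbf{c}\in C^t$ has $d^{(t)}(\mathbf{v},\mathbf{c})\le\rho$. Reed–Muller codes $\mathrm{RM}(r,m)\subseteq\mathbb{F}_2^{2^m}$: $\mathrm{RM}(0,m)=\{\overline{0},\overline{1}\}$, $\mathrm{RM}(m,m)=\mathbb{F}_2^{2^m}$, and for $1\leq r\leq m-1$, $\mathrm{RM}(r,m)=\{(\overline{u},\overline{u}+\overline{v}) : \overline{u}\in \mathrm{RM}(r,m-1),\ \overline{v}\in\mathrm{RM}(r-1,m-1)\}$.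 $R_t(r,m)=R_t(\mathrm{RM}(r,m))$. *)

From mathcomp Require Import all_boot.
Set Implicit Arguments. Unset Strict Implicit. Unset Printing Implicit Defensive.

(* Vectors of F_2^n are boolean finite functions (xor = addition in F_2). *)
Definition vec (n : nat) := {ffun 'I_n -> bool}.

(* total coordinate lookup: u_j if j < n, false otherwise *)
Definition get n (u : vec n) (j : nat) : bool :=
  if insub j is Some i then u i else false.

(* (u | v) : concatenation, placed in a vector of length k (used with k = 2n) *)
Definition concat n k (u v : vec n) : vec k :=
  [ffun i : 'I_k => if i < n then get u i else get v (i - n)].

Definition vadd n (u v : vec n) : vec n := [ffun i => xorb (u i) (v i)].

(* Reed--Muller code RM(r,m) <= F_2^(2^m), via the (u | u+v) construction.
   RM(0,m) = {0,1}; RM(r,m) = whole space for r >= m. *)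
Fixpoint RM (r m : nat) : {set vec (2 ^ m)} :=
  match m with
  | 0 => if r == 0 then [set [ffun=> false]; [ffun=> true]] else setT
  | m'.+1 =>
      if r == 0 then [set [ffun=> false]; [ffun=> true]]
      else if m'.+1 <= r then setT
      else [set concat (2 ^ m'.+1) u (vadd u w) | u in RM r m', w in RM r.-1 m']
  end.

Definition mat (t n : nat) := {ffun 'I_t -> vec n}.

Definition wtt t n (v : mat t n) : nat := #|[set j : 'I_n | [exists i, v i j]]|.

Definition dt t n (u v : mat t n) : nat :=
  wtt [ffun i => vadd (u i) (v i)].

Definition powC t n (C : {set vec n}) : {set mat t n} :=
  [set c : mat t n | [forall i, c i \in C]].

(* R_t(C): max over v of the distance to the nearest element of C^t, i.e. the
   smallest rho such that every v is within rho of some c in C^t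
   (C nonempty; default value n is only used for empty C). *)
Definition Rt (t n : nat) (C : {set vec n}) : nat :=
  \max_(v : mat t n) \big[minn/n]_(c in powC t C) dt v c.

Definition Rtrm (t r m : nat) : nat := Rt t (RM r m).

(* Call agreement of two t x n matrices the number n - d^(t) of columns on
   which they coincide.  Given N coordinates and a target word, the +-1
   correlations of the target with the 2^(k+1) codewords of RM(1,k) have mean
   square N (Parseval), and RM(1,k) is closed under complement, so some
   codeword agrees with the target on at least (N + sqrt N)/2 of them.  Choosing
   the t rows one after the other, each time on the coordinates where all
   previous rows already agree, gives a matrix of RM(1,k)^t agreeing with any v
   on 2^(k-t) + sqrt(2^t - 1) 2^((k-1)/2) / 2^t coordinates.  The Plotkin
   construction RM(r,m+1) = {(u | u + w)} makes the guaranteed agreement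
   superadditive, A(r,m+1) >= A(r,m) + A(r-1,m), and A(r,m) = 2^m when r >= m.
   The function 2^(m-t) + beta_t ((1 + sqrt 2)^(r-1) 2^((m-1)/2) - E(r,m)),
   where E(r,m) = sum_(2<=j<=r) C(m-j,r-j) (2 + sqrt 2)^(j-1) absorbs the
   boundary cases r = m, satisfies this recursion with equality; and when
   (2 + sqrt 2) r <= m every term of E(r,m) is at most C(m,r) / (2 + sqrt 2). *)

From mathcomp Require Import all_boot all_order all_algebra zify.
From Stdlib Require Import Reals Lra.
(* [Reals] rebinds [_ ^ _] on [nat] to [Nat.pow]; this restores [expn]. *)
Import ssrnat.
Set Implicit Arguments. Unset Strict Implicit. Unset Printing Implicit Defensive.

(** * Coordinates *)

Lemma get_ord n (u : vec n) (i : 'I_n) : get u i = u i.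
Proof. by rewrite /get (insubT (fun x => x < n) (ltn_ord i)) /=; congr (u _); apply: val_inj. Qed.

Lemma get_oob n (u : vec n) y : n <= y -> get u y = false.
Proof. by move=> n_le; rewrite /get insubN // -leqNgt. Qed.

Lemma get_ffun k (F : nat -> bool) y : get [ffun i : 'I_k => F i] y = (y < k) && F y.
Proof. by rewrite /get; case: insubP => [i _ <-|/negbTE ->] //; rewrite ffunE ltn_ord. Qed.

Lemma get_const n b y : get ([ffun=> b] : vec n) y = (y < n) && b.
Proof. exact: (@get_ffun n (fun=> b)). Qed.

Lemma get_vadd n (u v : vec n) y : get (vadd u v) y = get u y (+) get v y.
Proof.
have [y_lt|n_le] := ltnP y n; last by rewrite !get_oob.
by rewrite -[y]/(nat_of_ord (Ordinal y_lt)) !get_ord ffunE; case: (u _); case: (v _).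
Qed.

Lemma get_concat n k (u v : vec n) y :
  get (concat k u v) y = (y < k) && (if y < n then get u y else get v (y - n)).
Proof. exact: (@get_ffun k (fun x => if x < n then get u x else get v (x - n))). Qed.

Lemma get_concat_const k (u : vec (2 ^ k)) b y : y < 2 ^ k.+1 ->
  get (concat (2 ^ k.+1) u (vadd u [ffun=> b])) y =
  get u (y %% 2 ^ k) (+) (b && (2 ^ k <= y)).
Proof.
move=> y_lt; rewrite get_concat y_lt /=; have [y_lo|y_hi] := ltnP y (2 ^ k).
  by rewrite modn_small // andbF addbF.
have y_sub : y - 2 ^ k < 2 ^ k by rewrite expnS mul2n -addnn in y_lt; lia.
by rewrite get_vadd get_const y_sub andbT -(subnK y_hi) modnDr modn_small // addnK.
Qed.

Lemma eq_mod_half K x y : x < K.*2 -> y < K.*2 ->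
  (x == y) = (x %% K == y %% K) && ((K <= x) == (K <= y)).
Proof.
have mod_half z : z < K.*2 -> z %% K = if z < K then z else z - K.
  move=> z_lt; case: ltnP => [|K_le]; first exact: modn_small.
  by rewrite -{1}(subnK K_le) modnDr modn_small //; lia.
move=> /mod_half-> /mod_half->; do 2 case: ltnP => ? /=; apply/eqP/andP; lia.
Qed.

(** * First-order Reed-Muller codes *)

Fixpoint rm1_seq (k : nat) : seq (vec (2 ^ k)) :=
  match k with
  | 0 => [seq [ffun=> b] | b <- [:: false; true]]
  | k'.+1 => [seq concat (2 ^ k'.+1) u (vadd u [ffun=> b])
               | u <- rm1_seq k', b <- [:: false; true]]
  end.

Lemma rm1_seqS k : rm1_seq k.+1 =
  [seq concat (2 ^ k.+1) u (vadd u [ffun=> b]) | u <- rm1_seq k, b <- [:: false; true]].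
Proof. by []. Qed.

Lemma size_rm1_seq k : size (rm1_seq k) = 2 ^ k.+1.
Proof. by elim: k => [|k IH] //; rewrite rm1_seqS size_allpairs IH [in RHS]expnS mulnC. Qed.

Lemma RM0 k : RM 0 k = [set [ffun=> false]; [ffun=> true]].
Proof. by case: k. Qed.

Lemma rm1_seq_sub k a : a \in rm1_seq k -> a \in RM 1 k.
Proof.
elim: k a => [|k IH] a; first by rewrite /= inE.
rewrite rm1_seqS => /allpairsP[[u b] [/= /IH RMu _ ->]] /=.
case: ifP => _; first by rewrite inE.
by apply: imset2_f => //; case: b; rewrite RM0 !inE eqxx ?orbT.
Qed.

Lemma rm1_seq_compl k a : a \in rm1_seq k ->
  exists2 a', a' \in rm1_seq k & forall x, x < 2 ^ k -> get a' x = ~~ get a x.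
Proof.
elim: k a => [|k IH] a.
  case/mapP=> b _ ->; exists [ffun=> ~~ b]; first by apply: map_f; case: b.
  by move=> x x_lt; rewrite !get_const x_lt.
rewrite {1}rm1_seqS => /allpairsP[[u b] [u_in b_in ->]].
have [u' u'_in u'_compl] := IH u u_in.
exists (concat (2 ^ k.+1) u' (vadd u' [ffun=> b])).
  by rewrite rm1_seqS; apply/allpairsP; exists (u', b).
by move=> x x_lt; rewrite !get_concat_const // u'_compl ?ltn_mod ?expn_gt0 // addNb.
Qed.

Section Correlation.
Import Order.TTheory GRing.Theory Num.Theory.
Local Open Scope ring_scope.

Lemma exists_ge_average (T : eqType) (R : realDomainType) (s : seq T) (F : T -> R) c :
  s != [::] -> c *+ size s <= \sum_(a <- s) F a -> exists2 a, a \in s & c <= F a.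
Proof.
move=> s_nz sum_ge; apply/hasP; apply: contraLR sum_ge => /hasPn F_lt.
rewrite -ltNge -iter_addr_0 -count_predT -big_const_seq !(big_seq_cond predT) /=.
apply: ltr_sum => [|a /andP[/F_lt]]; last by rewrite ltNge.
by case: s s_nz {F_lt} => // a s' _; apply/hasP; exists a; rewrite ?inE ?eqxx.
Qed.

Lemma rm1_seq_orthogonal k x y : (x < 2 ^ k)%N -> (y < 2 ^ k)%N ->
  \sum_(a <- rm1_seq k) (-1) ^+ get a x * (-1) ^+ get a y
    = (x == y)%:R * (size (rm1_seq k))%:R :> int.
Proof.
elim: k x y => [|k IH] x y x_lt y_lt.
  have zero z : (z < 2 ^ 0)%N -> z = 0%N by case: z.
  by rewrite (zero x x_lt) (zero y y_lt) big_map !big_cons big_nil !get_const.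
rewrite rm1_seqS big_allpairs_dep size_allpairs /=.
under eq_bigr => u _.
  rewrite !big_cons big_nil !get_concat_const // /= !addbF addr0 !signr_addb.
  rewrite mulrACA -[X in X + _]mulr1 -mulrDr.
  over.
have sign_pair (b c : bool) : 1 + (-1) ^+ b * (-1) ^+ c = (b == c)%:R * 2 :> int.
  by case: b; case: c.
rewrite -mulr_suml IH ?ltn_mod ?expn_gt0 // sign_pair.
rewrite [in RHS](@eq_mod_half (2 ^ k) x y) -?mul2n -?expnS //.
by case: eqP; case: eqP => _ _ /=; lia.
Qed.

Definition correlation (xs : seq nat) (g : nat -> bool) n (a : vec n) : int :=
  \sum_(x <- xs) (-1) ^+ g x * (-1) ^+ get a x.

Lemma correlation_count xs g n (a : vec n) :
  correlation xs g a = (2 * count (fun x => g x == get a x) xs)%:R - (size xs)%:R.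
Proof.
elim: xs => [|x xs IH]; first by rewrite /correlation big_nil.
rewrite /correlation big_cons -/(correlation _ _ _) IH /=.
by case: (g x); case: (get a x) => /=; lia.
Qed.

Lemma correlation_compl xs g n (a a' : vec n) :
  {in xs, forall x, get a' x = ~~ get a x} -> correlation xs g a' = - correlation xs g a.
Proof.
move=> a'_compl; rewrite /correlation -sumrN; apply: eq_big_seq => x /a'_compl->.
by rewrite signrN mulrN.
Qed.

Lemma rm1_seq_parseval k xs g : uniq xs -> {in xs, forall x, x < 2 ^ k}%N ->
  \sum_(a <- rm1_seq k) correlation xs g a ^+ 2 = (size (rm1_seq k))%:R *+ size xs.
Proof.
move=> xs_uniq xs_lt.
under eq_bigr => a _ do rewrite expr2 big_distrlr /=.
rewrite exchange_big /= -iter_addr_0 -count_predT -big_const_seq.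
apply: eq_big_seq => x xs_x; rewrite exchange_big /=.
under eq_big_seq => y xs_y.
  under eq_bigr => a _ do rewrite mulrACA.
  rewrite -mulr_sumr rm1_seq_orthogonal ?xs_lt //.
  over.
rewrite (bigD1_seq x) //= eqxx -expr2 sqrr_sign !mul1r big1_seq ?addr0 // => y /andP[y_x _].
by rewrite eq_sym (negbTE y_x) mul0r mulr0.
Qed.

Lemma rm1_correlated k xs g : uniq xs -> {in xs, forall x, x < 2 ^ k}%N ->
  exists2 a, a \in RM 1 k &
    let A := count (fun x => g x == get a x) xs in
    (size xs <= 2 * A)%N && (size xs <= (2 * A - size xs) ^ 2)%N.
Proof.
move=> xs_uniq xs_lt.
have [a a_in sq_ge] : exists2 a, a \in rm1_seq k & (size xs)%:R <= correlation xs g a ^+ 2.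
  apply: exists_ge_average; first by rewrite -size_eq0 size_rm1_seq -lt0n expn_gt0.
  by rewrite rm1_seq_parseval // -!mulrnA mulnC.
wlog corr_ge0 : a a_in sq_ge / 0 <= correlation xs g a.
  move=> gen; have [|corr_lt0] := lerP 0 (correlation xs g a); first exact: gen.
  have [a' a'_in a'_compl] := rm1_seq_compl a_in.
  have corr_a' : correlation xs g a' = - correlation xs g a.
    by apply: correlation_compl => x /xs_lt /a'_compl.
  by apply: (gen a'); rewrite // corr_a' ?sqrrN // oppr_ge0 ltW.
exists a; first exact: rm1_seq_sub.
move: corr_ge0 sq_ge; rewrite correlation_count /=; set A := count _ _; set N := size xs.
by rewrite subr_ge0 ler_nat => N_le; rewrite N_le -natrB // -natrX ler_nat.
Qed.

End Correlation.

(** * Agreement and the Plotkin construction *)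

Definition agree t n (j : nat) (v c : mat t n) : nat :=
  count (fun x => [forall i : 'I_t, (i < j) ==> (get (v i) x == get (c i) x)]) (iota 0 n).

Lemma agree0 t n (v c : mat t n) : agree 0 v c = n.
Proof.
by rewrite /agree (eq_count (a2 := predT)) ?count_predT ?size_iota // => x; apply/forallP.
Qed.

Lemma agree_refl t n j (v : mat t n) : agree j v v = n.
Proof.
rewrite /agree (eq_count (a2 := predT)) ?count_predT ?size_iota // => x.
by apply/forallP => i; rewrite eqxx implybT.
Qed.

Lemma card_count n (P : nat -> bool) : #|[set j : 'I_n | P j]| = count P (iota 0 n).
Proof.
by rewrite cardsE -sum1_card -(big_mkord P (fun _ => 1)) /index_iota subn0 sum1_count.
Qed.

Lemma dt_add_agree t n (v c : mat t n) : dt v c + agree t v c = n.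
Proof.
have -> : dt v c = count (fun x => [exists i, get (v i) x != get (c i) x]) (iota 0 n).
  rewrite /dt /wtt -card_count; apply: eq_card => x; rewrite !inE.
  by apply: eq_existsb => i; rewrite !get_ord !ffunE; case: (v i x); case: (c i x).
rewrite /agree -[X in _ = X](size_iota 0 n).
rewrite -(count_predC (fun x => [exists i, get (v i) x != get (c i) x])).
congr (_ + _); apply: eq_count => x /=; rewrite negb_exists.
by apply: eq_forallb => i; rewrite ltn_ord negbK.
Qed.

Lemma bigmin_le (T : finType) (A : pred T) (F : T -> nat) n x :
  x \in A -> \big[minn/n]_(y in A) F y <= F x.
Proof.
move=> Ax; have : x \in index_enum T by rewrite mem_index_enum.
elim: (index_enum T) => [|y s IH] //; rewrite inE big_cons => /orP[/eqP<-|s_x].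
  by rewrite Ax geq_minl.
by case: (y \in A); [apply: leq_trans (geq_minr _ _) (IH s_x) | exact: IH].
Qed.

Definition mat_add t n (u v : mat t n) : mat t n := [ffun i => vadd (u i) (v i)].

Definition mat_left t m (v : mat t (2 ^ m.+1)) : mat t (2 ^ m) :=
  [ffun i => [ffun x : 'I_(2 ^ m) => get (v i) x]].

Definition mat_right t m (v : mat t (2 ^ m.+1)) : mat t (2 ^ m) :=
  [ffun i => [ffun x : 'I_(2 ^ m) => get (v i) (x + 2 ^ m)]].

Definition plotkin t m (u w : mat t (2 ^ m)) : mat t (2 ^ m.+1) :=
  [ffun i => concat (2 ^ m.+1) (u i) (vadd (u i) (w i))].

Lemma get_mat_left t m (v : mat t (2 ^ m.+1)) i x :
  get (mat_left v i) x = (x < 2 ^ m) && get (v i) x.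
Proof. by rewrite ffunE; exact: (@get_ffun _ (get (v i))). Qed.

Lemma get_mat_right t m (v : mat t (2 ^ m.+1)) i x :
  get (mat_right v i) x = (x < 2 ^ m) && get (v i) (x + 2 ^ m).
Proof. by rewrite ffunE; exact: (@get_ffun _ (fun y => get (v i) (y + 2 ^ m))). Qed.

Lemma plotkin_in t r m (u w : mat t (2 ^ m)) : r != 0 -> r <= m ->
  u \in powC t (RM r m) -> w \in powC t (RM r.-1 m) -> plotkin u w \in powC t (RM r m.+1).
Proof.
move=> /negbTE r_nz r_le /[!inE] /forallP RMu /forallP RMw.
by apply/forallP => i; rewrite /= r_nz leqNgt ltnS r_le ffunE; apply: imset2_f.
Qed.

Lemma agree_plotkin t m (v : mat t (2 ^ m.+1)) (u w : mat t (2 ^ m)) :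
  agree t v (plotkin u w) = agree t (mat_left v) u + agree t (mat_add (mat_right v) u) w.
Proof.
have two_halves : 2 ^ m.+1 = 2 ^ m + 2 ^ m by rewrite expnS mul2n addnn.
rewrite /agree.
have -> : iota 0 (2 ^ m.+1) = iota 0 (2 ^ m) ++ map (addn (2 ^ m)) (iota 0 (2 ^ m)).
  by rewrite -iotaDl addn0 -iotaD -two_halves.
rewrite count_cat count_map; congr (_ + _); apply: eq_in_count => x.
all: rewrite mem_iota add0n => /andP[_ x_lt]; apply: eq_forallb => i; congr (_ ==> _).
all: rewrite [plotkin _ _ _]ffunE get_concat.
  have x_lt2 : x < 2 ^ m.+1 by rewrite two_halves ltn_addr.
  by rewrite get_mat_left x_lt x_lt2.
have x_hi : 2 ^ m + x < 2 ^ m.+1 by rewrite two_halves ltn_add2l.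
rewrite [mat_add _ _ _]ffunE !get_vadd get_mat_right x_lt x_hi.
rewrite ltnNge leq_addr addKn /= addnC.
by case: (get (v i) _); case: (get (u i) x); case: (get (w i) x).
Qed.

Lemma agree_next_row t k (v c : mat t (2 ^ k)) j : j < t -> c \in powC t (RM 1 k) ->
  exists2 c', c' \in powC t (RM 1 k) &
    let N := agree j v c in let N' := agree j.+1 v c' in
    (N <= 2 * N') && (N <= (2 * N' - N) ^ 2).
Proof.
move=> j_lt /[!inE] /forallP RMc.
set P := fun x => [forall i : 'I_t, (i < j) ==> (get (v i) x == get (c i) x)].
set xs := filter P (iota 0 (2 ^ k)); set row := get (v (Ordinal j_lt)).
have [||a RMa a_good] := @rm1_correlated k xs row.
- by rewrite filter_uniq // iota_uniq.
- by move=> x; rewrite mem_filter mem_iota => /andP[_ /andP[]].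
exists [ffun i => if val i == j then a else c i].
  by rewrite inE; apply/forallP => i; rewrite ffunE; case: eqP.
have -> : agree j v c = size xs by rewrite size_filter.
suff -> : agree j.+1 v [ffun i => if val i == j then a else c i] =
          count (fun x => row x == get a x) xs by exact: a_good.
rewrite /agree count_filter; apply: eq_count => x /=.
apply/forallP/andP => [agr|[agr_j /forallP agr_lt] i].
  split; first by have := agr (Ordinal j_lt); rewrite /= ltnSn ffunE eqxx.
  apply/forallP => i; apply/implyP => i_lt; have := agr i.
  by rewrite ffunE (ltn_eqF i_lt) ltnS (ltnW i_lt).
apply/implyP; rewrite ffunE ltnS leq_eqVlt => /orP[/eqP i_j|i_lt].
  by rewrite i_j eqxx; have -> : i = Ordinal j_lt by apply: val_inj.
by rewrite (ltn_eqF i_lt); have := agr_lt i; rewrite i_lt.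
Qed.

Lemma bin_sub1_ratio m r j : j < r -> r <= m ->
  'C(m - j.+1, r - j.+1) * m <= 'C(m - j, r - j) * r.
Proof.
move=> j_lt r_le; have := mul_bin_diag (m - j) (r - j.+1).
have -> : (m - j).-1 = m - j.+1 by lia.
have -> : (r - j.+1).+1 = r - j by lia.
set A := 'C(m - j.+1, _); set B := 'C(m - j, _) => diag.
have key : (r - j) * m <= (m - j) * r.
  by rewrite !mulnBl [r * m]mulnC leq_sub2l // leq_mul2l r_le orbT.
have : (m - j) * (A * m) <= (m - j) * (B * r).
  by rewrite mulnA diag mulnAC mulnCA mulnC leq_mul2l key orbT.
by rewrite leq_pmul2l // subn_gt0 (leq_trans j_lt r_le).
Qed.

Lemma bin_sub_ratio m r j : j <= r -> r <= m ->
  'C(m - j, r - j) * m ^ j <= 'C(m, r) * r ^ j.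
Proof.
move=> + r_le; elim: j => [|j IH] j_lt; first by rewrite !subn0 !expn0 !muln1.
rewrite !expnS mulnA; apply: (@leq_trans ('C(m - j, r - j) * r * m ^ j)).
  by rewrite leq_mul2r bin_sub1_ratio ?orbT.
by rewrite mulnAC mulnCA [X in X <= _]mulnC leq_mul2l (IH (ltnW j_lt)) orbT.
Qed.

(** * Real bounds *)

Local Open Scope R_scope.

Lemma INR_addn a b : INR (a + b)%N = INR a + INR b.
Proof. exact: plus_INR. Qed.

Lemma INR_muln a b : INR (a * b)%N = INR a * INR b.
Proof. exact: mult_INR. Qed.

Lemma INR_expn a b : INR (a ^ b)%N = INR a ^ b.
Proof. by elim: b => [|b IH] //; rewrite expnS INR_muln IH. Qed.

Lemma INR_pow2 k : INR (2 ^ k)%N = 2 ^ k.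
Proof. by rewrite INR_expn; congr (_ ^ _); rewrite /=; lra. Qed.

Lemma INR_subn a b : (b <= a)%N -> INR (a - b)%N = INR a - INR b.
Proof. by move=> b_le; rewrite -{2}(subnK b_le) INR_addn; lra. Qed.

Local Notation sqrt2 := (sqrt 2).
Local Notation gamma := (2 + sqrt2).

Lemma sqrt2_pos : 0 < sqrt2.
Proof. by apply: sqrt_lt_R0; lra. Qed.

Lemma sqrt2_sq : sqrt2 * sqrt2 = 2.
Proof. by apply: sqrt_sqrt; lra. Qed.

Lemma sqrt2_bounds : 1 <= sqrt2 <= 3 / 2.
Proof.
split; first by rewrite -sqrt_1; apply: sqrt_le_1_alt; lra.
by rewrite -(sqrt_pow2 (3 / 2)); [apply: sqrt_le_1_alt | ]; lra.
Qed.

Lemma pow_sqrt2_sq k : sqrt2 ^ k * sqrt2 ^ k = 2 ^ k.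
Proof. by rewrite -Rpow_mult_distr sqrt2_sq. Qed.

Lemma sqrt_pow2_nat k : sqrt (2 ^ k) = sqrt2 ^ k.
Proof.
apply: sqrt_lem_1; [by apply: pow_le; lra | by apply: pow_le; exact: sqrt_pos |].
exact: pow_sqrt2_sq.
Qed.

Lemma Rpower_half m : Rpower 2 ((INR m - 1) / 2) = sqrt2 ^ m / sqrt2.
Proof.
have -> : (INR m - 1) / 2 = / 2 * INR m + - (/ 2) by field.
rewrite Rpower_plus Rpower_Ropp -Rpower_mult Rpower_sqrt; last lra.
by rewrite Rpower_pow //; exact: sqrt2_pos.
Qed.

Lemma add_sqrt_le (N A : nat) : (N <= 2 * A)%N -> (N <= (2 * A - N) ^ 2)%N ->
  INR N + sqrt (INR N) <= 2 * INR A.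
Proof.
move=> N_le /leP/le_INR; rewrite INR_expn (INR_subn N_le) INR_muln /= => sq_ge.
have gap_ge0 : 0 <= 2 * INR A - INR N.
  by move/leP/le_INR: N_le; rewrite INR_muln /=; lra.
suff : sqrt (INR N) <= 2 * INR A - INR N by lra.
rewrite -[X in _ <= X](sqrt_pow2 _ gap_ge0); apply: sqrt_le_1_alt.
by move: sq_ge; rewrite /=; nra.
Qed.

Lemma agreement_row_step k j (N N' : R) :
  2 ^ k + sqrt (2 ^ j - 1) * (sqrt2 ^ k / sqrt2) <= N * 2 ^ j ->
  N + sqrt N <= 2 * N' ->
  2 ^ k + sqrt (2 ^ j.+1 - 1) * (sqrt2 ^ k / sqrt2) <= N' * 2 ^ j.+1.
Proof.
move=> N_ge gain; have s_pos := sqrt2_pos.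
have c_pos : 0 < sqrt2 ^ k / sqrt2 by apply: Rdiv_lt_0_compat => //; apply: pow_lt.
have q_ge0 := sqrt_pos (2 ^ j - 1).
have two_j : 0 < 2 ^ j by apply: pow_lt; lra.
have qc_ge0 : 0 <= sqrt (2 ^ j - 1) * (sqrt2 ^ k / sqrt2) by apply: Rmult_le_pos; lra.
have two_k : 0 < 2 ^ k by apply: pow_lt; lra.
have N_pos : 0 < N by nra.
have q_le : sqrt (2 ^ j.+1 - 1) * (sqrt2 ^ k / sqrt2) <= sqrt2 ^ j * sqrt2 ^ k.
  have -> : sqrt2 ^ j * sqrt2 ^ k = sqrt2 ^ j.+1 * (sqrt2 ^ k / sqrt2) by rewrite /=; field; lra.
  apply: Rmult_le_compat_r; first lra.
  by rewrite -sqrt_pow2_nat; apply: sqrt_le_1_alt; lra.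
have sqrtN_ge : sqrt2 ^ j * sqrt2 ^ k <= 2 ^ j * sqrt N.
  rewrite -pow_sqrt2_sq Rmult_assoc; apply: Rmult_le_compat_l; first by left; apply: pow_lt.
  rewrite -!sqrt_pow2_nat -sqrt_mult; try lra.
  by apply: sqrt_le_1_alt; lra.
have gain_j : (N + sqrt N) * 2 ^ j <= 2 * N' * 2 ^ j by apply: Rmult_le_compat_r; lra.
have -> : N' * 2 ^ j.+1 = 2 * N' * 2 ^ j by rewrite /=; ring.
lra.
Qed.

Definition agrees_at_least t r m (X : R) :=
  forall v : mat t (2 ^ m), exists2 c, c \in powC t (RM r m) & X <= INR (agree t v c).

Lemma agrees_at_least_le t r m X Y :
  agrees_at_least t r m Y -> X <= Y -> agrees_at_least t r m X.
Proof. by move=> agrY X_le v; have [c RMc Yc] := agrY v; exists c => //; lra. Qed.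

Lemma Rtrm_le_agreement t r m X : agrees_at_least t r m X -> INR (Rtrm t r m) <= 2 ^ m - X.
Proof.
move=> agrX; rewrite /Rtrm /Rt.
have [|v ->] := eq_bigmax (fun v : mat t (2 ^ m) =>
  \big[minn/2 ^ m]_(c in powC t (RM r m)) dt v c)%N.
  by apply/card_gt0P; exists [ffun=> [ffun=> false]].
have [c RMc Xc] := agrX v.
apply: Rle_trans (le_INR _ _ (leP (bigmin_le _ _ RMc))) _.
by have := f_equal INR (dt_add_agree v c); rewrite INR_addn INR_pow2; lra.
Qed.

Lemma rm1_agreement_rows t k (v : mat t (2 ^ k)) j : (j <= t)%N ->
  exists2 c, c \in powC t (RM 1 k) &
    2 ^ k + sqrt (2 ^ j - 1) * (sqrt2 ^ k / sqrt2) <= INR (agree j v c) * 2 ^ j.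
Proof.
elim: j => [|j IH] j_le.
  set a := nth [ffun=> false] (rm1_seq k) 0.
  have RMa : a \in RM 1 k by rewrite rm1_seq_sub // mem_nth // size_rm1_seq expn_gt0.
  exists [ffun=> a]; first by rewrite inE; apply/forallP => i; rewrite ffunE.
  by rewrite agree0 INR_pow2 /= Rminus_diag sqrt_0; lra.
have [c RMc N_ge] := IH (ltnW j_le).
have [c' RMc' /andP[N_le sq_ge]] := agree_next_row v j_le RMc.
by exists c' => //; apply: agreement_row_step N_ge (add_sqrt_le N_le sq_ge).
Qed.

Definition beta t := sqrt (2 ^ t - 1) / 2 ^ t.

Lemma beta_ge0 t : 0 <= beta t.
Proof.
apply: Rmult_le_pos; first exact: sqrt_pos.
by apply: Rlt_le; apply: Rinv_0_lt_compat; apply: pow_lt; lra.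
Qed.

Lemma rm1_agreement t k :
  agrees_at_least t 1 k (2 ^ k / 2 ^ t + beta t * (sqrt2 ^ k / sqrt2)).
Proof.
move=> v; have [c RMc agr] := rm1_agreement_rows v (leqnn t).
exists c => //; have two_t : 0 < 2 ^ t by apply: pow_lt; lra.
have s_pos := sqrt2_pos.
apply: (Rmult_le_reg_r (2 ^ t)) => //; rewrite /beta.
have -> : (2 ^ k / 2 ^ t + sqrt (2 ^ t - 1) / 2 ^ t * (sqrt2 ^ k / sqrt2)) * 2 ^ t =
          2 ^ k + sqrt (2 ^ t - 1) * (sqrt2 ^ k / sqrt2) by field; lra.
exact: agr.
Qed.

Lemma RM_full r m : (1 <= r)%N -> (m <= r)%N -> RM r m = setT.
Proof. by case: r => // r _; case: m => [|m] //= ->. Qed.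

Lemma agrees_full t r m : (1 <= r)%N -> (m <= r)%N -> agrees_at_least t r m (2 ^ m).
Proof.
move=> r_ge1 m_le v; exists v; last by rewrite agree_refl INR_pow2; lra.
by rewrite inE RM_full //; apply/forallP => i; rewrite inE.
Qed.

Lemma agrees_plotkin t r m X Y : r != 0%N -> (r <= m)%N ->
  agrees_at_least t r m X -> agrees_at_least t r.-1 m Y ->
  agrees_at_least t r m.+1 (X + Y).
Proof.
move=> r_nz r_le agrX agrY v.
have [u RMu Xu] := agrX (mat_left v).
have [w RMw Yw] := agrY (mat_add (mat_right v) u).
by exists (plotkin u w); [exact: plotkin_in | rewrite agree_plotkin INR_addn; lra].
Qed.

Definition growth r m := (1 + sqrt2) ^ (r - 1) * (sqrt2 ^ m / sqrt2).

Definition deficit_term r m j :=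
  if (2 <= j)%N then INR 'C(m - j, r - j) * gamma ^ j.-1 else 0.

Definition deficit r m := sum_f_R0 (deficit_term r m) r.

Definition agreement_target t r m := 2 ^ m / 2 ^ t + beta t * (growth r m - deficit r m).

Lemma growth_rec r m : (2 <= r)%N -> growth r m + growth r.-1 m = growth r m.+1.
Proof.
case: r => [|[|r]] // _; rewrite /growth !subn1 /=; have s_pos := sqrt2_pos.
set c := sqrt2 ^ m / sqrt2; set g := (1 + sqrt2) ^ r.
have -> : sqrt2 * sqrt2 ^ m / sqrt2 = sqrt2 * c by rewrite /c; field; lra.
have -> : (1 + sqrt2) * g * (sqrt2 * c) = g * c * (sqrt2 * sqrt2 + sqrt2) by ring.
by rewrite sqrt2_sq; ring.
Qed.

Lemma growth_diag r : (1 <= r)%N -> growth r r = gamma ^ r.-1.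
Proof.
case: r => [|r] // _; rewrite /growth subn1 /=; have s_pos := sqrt2_pos.
have -> : sqrt2 * sqrt2 ^ r / sqrt2 = sqrt2 ^ r by field; lra.
by rewrite -Rpow_mult_distr; congr (_ ^ _); have := sqrt2_sq; lra.
Qed.

Lemma deficit_term_ge0 r m j : 0 <= deficit_term r m j.
Proof.
rewrite /deficit_term; case: ifP => _; last lra.
by apply: Rmult_le_pos; [exact: pos_INR | apply: pow_le; have := sqrt2_pos; lra].
Qed.

Lemma deficit_one m : deficit 1 m = 0.
Proof. by rewrite /deficit /= /deficit_term /=; lra. Qed.

Lemma deficit_rec r m : (2 <= r)%N -> (r <= m)%N ->
  deficit r m + deficit r.-1 m = deficit r m.+1.
Proof.
case: r => [|r] // r_ge2 r_le; rewrite /deficit !tech5 /=.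
have -> : deficit_term r.+1 m.+1 r.+1 = deficit_term r.+1 m r.+1.
  by rewrite /deficit_term !subnn !bin0.
suff -> : sum_f_R0 (deficit_term r.+1 m.+1) r =
          sum_f_R0 (deficit_term r.+1 m) r + sum_f_R0 (deficit_term r m) r by lra.
rewrite -plus_sum; apply: sum_eq => j /leP j_le; rewrite /deficit_term.
case: ifP => _; last lra.
have j_le_m : (j <= m)%N by apply: leq_trans j_le (ltnW r_le).
by rewrite (subSn j_le_m) (subSn j_le) binS INR_addn; ring.
Qed.

Lemma deficit_diag r : (2 <= r)%N -> gamma ^ r.-1 <= deficit r r.
Proof.
case: r => [|r] // r_ge2; rewrite /deficit tech5 {2}/deficit_term r_ge2 subnn bin0 /=.
by have := cond_pos_sum _ r (deficit_term_ge0 r.+1 r.+1); lra.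
Qed.

Lemma deficit_term_le r m j : (j <= r)%N -> gamma * INR r <= INR m ->
  deficit_term r m j <= INR 'C(m, r) / gamma.
Proof.
move=> j_le gamma_r; have [s_ge1 _] := sqrt2_bounds.
have C_ge0 := pos_INR 'C(m, r).
rewrite /deficit_term; case: ifP => [j_ge2|_]; last first.
  by apply: Rmult_le_pos; [lra | apply: Rlt_le; apply: Rinv_0_lt_compat; lra].
have r_pos : 0 < INR r by apply: lt_0_INR; apply/ltP; lia.
have r_le_m : (r <= m)%N by apply/leP/INR_le; nra.
move: (bin_sub_ratio j_le r_le_m) => /leP/le_INR; rewrite !INR_muln !INR_expn => ratio.
have pow_le : (gamma * INR r) ^ j <= INR m ^ j by apply: pow_incr; nra.
rewrite Rpow_mult_distr in pow_le.
have key : INR 'C(m - j, r - j) * gamma ^ j <= INR 'C(m, r).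
  apply: (Rmult_le_reg_r (INR r ^ j)); first exact: pow_lt.
  rewrite Rmult_assoc; apply: Rle_trans ratio.
  by apply: Rmult_le_compat_l => //; exact: pos_INR.
apply: (Rmult_le_reg_r gamma); first lra.
have -> : INR 'C(m, r) / gamma * gamma = INR 'C(m, r) by field; lra.
have gamma_j : gamma ^ j = gamma ^ j.-1 * gamma.
  by rewrite -[in LHS](prednK (ltnW j_ge2)) /= Rmult_comm.
by rewrite gamma_j in key; lra.
Qed.

Lemma deficit_le_binomial r m : (1 <= r)%N -> gamma * INR r <= INR m ->
  deficit r m <= INR r * INR 'C(m, r) / sqrt sqrt2.
Proof.
move=> r_ge1 gamma_r; have [s_ge1 s_le] := sqrt2_bounds.
have q_pos : 0 < sqrt sqrt2 by apply: sqrt_lt_R0; lra.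
have q_le : sqrt sqrt2 <= 3 / 2.
  by rewrite -(sqrt_pow2 (3 / 2)); [apply: sqrt_le_1_alt | ]; lra.
have r_ge1' : 1 <= INR r by apply: (le_INR 1); apply/leP.
have C_ge0 := pos_INR 'C(m, r).
apply: Rle_trans (sum_Rle _ (fun=> INR 'C(m, r) / gamma) r _) _.
  by move=> j /leP j_le; exact: deficit_term_le.
rewrite sum_cte S_INR.
apply: (Rmult_le_reg_r (gamma * sqrt sqrt2)); first nra.
have -> : INR 'C(m, r) / gamma * (INR r + 1) * (gamma * sqrt sqrt2) =
          INR 'C(m, r) * ((INR r + 1) * sqrt sqrt2) by field; lra.
have -> : INR r * INR 'C(m, r) / sqrt sqrt2 * (gamma * sqrt sqrt2) =
          INR 'C(m, r) * (INR r * gamma) by field; lra.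
by apply: Rmult_le_compat_l => //; nra.
Qed.

Lemma agreement_target_rec t r m : (2 <= r)%N -> (r <= m)%N ->
  agreement_target t r m.+1 = agreement_target t r m + agreement_target t r.-1 m.
Proof.
move=> r_ge2 r_le; rewrite /agreement_target -growth_rec // -deficit_rec //.
have two_t : 0 < 2 ^ t by apply: pow_lt; lra.
by rewrite /=; field; lra.
Qed.

Lemma agreement_target_diag t r : (2 <= r)%N -> agreement_target t r r <= 2 ^ r.
Proof.
move=> r_ge2; rewrite /agreement_target growth_diag ?(ltnW r_ge2) //.
have := deficit_diag r_ge2; have := beta_ge0 t.
have two_t : 1 <= 2 ^ t by apply: pow_R1_Rle; lra.
have two_r : 0 < 2 ^ r by apply: pow_lt; lra.
have -> : 2 ^ r / 2 ^ t = 2 ^ r - 2 ^ r * (1 - / 2 ^ t) by field; lra.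
have : 0 <= 1 - / 2 ^ t by have := Rinv_le_contravar 1 (2 ^ t); rewrite Rinv_1; lra.
nra.
Qed.

Lemma rm_agreement t r m : (1 <= r)%N -> (r <= m)%N ->
  agrees_at_least t r m (agreement_target t r m).
Proof.
elim: m r => [|m IH] r r_ge1 r_le; first by case: r r_ge1 r_le.
have [->|r_ne1] := eqVneq r 1%N.
  apply: agrees_at_least_le (@rm1_agreement t m.+1) _.
  by rewrite /agreement_target /growth deficit_one subnn /=; lra.
have r_ge2 : (2 <= r)%N by lia.
have [r_eq|r_ne] := eqVneq r m.+1.
  subst r; apply: agrees_at_least_le (agrees_full r_ge1 (leqnn _)) _.
  exact: agreement_target_diag.
rewrite agreement_target_rec; try lia.
by apply: agrees_plotkin; try apply: IH; lia.
Qed.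

Theorem lemma20 (m t r : nat) :
  (3 <= m)%N -> (2 <= r)%N -> (INR r <= INR m / (2 + sqrt 2))%R ->
  (INR (Rtrm t r m) <=
     (1 - 1 / 2 ^ t) * 2 ^ m
     - sqrt (2 ^ t - 1) / 2 ^ t * (1 + sqrt 2) ^ (r - 1)
       * Rpower 2 ((INR m - 1) / 2)
     + sqrt (2 ^ t - 1) / (2 ^ t * sqrt (sqrt 2)) * INR r * INR 'C(m, r))%R.
Proof.
move=> _ r_ge2 r_le; have [s_ge1 _] := sqrt2_bounds.
have gamma_r : gamma * INR r <= INR m.
  have -> : INR m = gamma * (INR m / gamma) by field; lra.
  by apply: Rmult_le_compat_l; lra.
have r_le_m : (r <= m)%N by apply/leP/INR_le; have := pos_INR r; nra.
have r_ge1 : (1 <= r)%N by apply: ltnW.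
apply: Rle_trans (Rtrm_le_agreement (rm_agreement r_ge1 r_le_m)) _.
have := deficit_le_binomial r_ge1 gamma_r; have := beta_ge0 t.
have q_pos : 0 < sqrt sqrt2 by apply: sqrt_lt_R0; lra.
have two_t : 0 < 2 ^ t by apply: pow_lt; lra.
rewrite /agreement_target /growth /beta Rpower_half.
set D := deficit r m; set G := _ * (sqrt2 ^ m / sqrt2); set B := sqrt _ / 2 ^ t.
move=> B_ge0 D_le.
have -> : sqrt (2 ^ t - 1) / (2 ^ t * sqrt sqrt2) * INR r * INR 'C(m, r) =
          B * (INR r * INR 'C(m, r) / sqrt sqrt2) by rewrite /B; field; lra.
have -> : (1 - 1 / 2 ^ t) * 2 ^ m = 2 ^ m - 2 ^ m / 2 ^ t by field; lra.
have := Rmult_le_compat_l _ _ _ B_ge0 D_le; rewrite /G; lra.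
Qed.
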